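(* Let $\sigma$ and $\tau$ be matchings and let $n\in\mathbb{N}$ with $n\geq|\sigma|$. Then $$|\mathcal{M}_{n}(\sigma(\tau+|\sigma|))|=|\mathcal{M}_{n}(\sigma)|+\sum_{\ell=|\sigma|}^{n}\sum_{k=0}^{n-\ell}\binom{2\ell+k-1}{k}\binom{2n-2\ell-k}{k}\,k!\,|\mu_{\ell}(\sigma)|\,|\mathcal{M}_{n-\ell-k}(\tau)|.$$
   Context: A matching of order $n$ is a partition of $[2n]=\{1,\dots,2n\}$ into blocks (edges) of size two; it is identified with the unique word $w\in[n]^{2n}$ in which the two vertices of each edge carry the same letter and the letters of edges appear in increasing order of their left (smaller) vertices (e.g. $1212$ is $\{\{1,3\},\{2,4\}\}$). $|\sigma|$ denotes the order (number of edges) of $\sigma$. A matching $\sigma$ of order $k$ is a pattern of $\tau$ (written $\sigma\le\tau$, ''$\tau$ contains $\sigma$'') if there are $i_1<\dots<i_{2k}$ in $[2|\tau|]$ with $\{i_p,i_q\}\in\tau$ iff $\{p,q\}\in\sigma$; otherwise $\tau$ avoids $\sigma$. $\mathcal{M}_n(S)$ is the set of matchings of order $n$ avoiding every pattern in $S$ ($\mathcal{M}_0(S)$ contains only the empty matching). For matchings $\sigma,\tau$, $\sigma(\tau+|\sigma|)$ is the juxtaposition: the word of $\sigma$ followed by the word of $\tau$ with $|\sigma|$ added to each letter. The rightmost edge of a matching is the edge with the largest right vertex. A matching $\lambda$ minimally contains $\sigma$ if it contains $\sigma$ and the matching obtained from $\lambda$ by deleting its rightmost edge does not contain $\sigma$;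 $\mu_\ell(\sigma)$ is the set of matchings of order $\ell$ minimally containing $\sigma$. *)

From mathcomp Require Import all_boot.
Set Implicit Arguments. Unset Strict Implicit. Unset Printing Implicit Defensive.

(* A matching of order n is represented as a fixed-point-free involution on
   the 2n positions {0,...,2n-1} (position i stands for vertex i+1 of [2n]):
   f i is the partner of i.  This is in bijection with the canonical words. *)
Definition mfun (n : nat) := {ffun 'I_(n.*2) -> 'I_(n.*2)}.

Definition is_matching (n : nat) (f : mfun n) : bool :=
  [forall i, (f (f i) == i) && (f i != i)].

Definition contains (k m : nat) (s : mfun k) (t : mfun m) : bool :=
  [exists e : {ffun 'I_(k.*2) -> 'I_(m.*2)},
    [forall p : 'I_(k.*2), forall q : 'I_(k.*2),
      ((p < q) ==> (e p < e q)) && ((t (e p) == e q) == (s p == q))]].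

(* nat extension of a finite function (identity outside the domain) *)
Definition natf (N : nat) (f : {ffun 'I_N -> 'I_N}) (x : nat) : nat :=
  oapp (fun i : 'I_N => val (f i)) x (insub x).

(* build a finite function from a nat function (values out of range: junk) *)
Definition mkf (N : nat) (g : nat -> nat) : {ffun 'I_N -> 'I_N} :=
  [ffun i : 'I_N => insubd i (g i)].

Definition juxt (a b : nat) (s : mfun a) (t : mfun b) : mfun (a + b) :=
  mkf _ (fun x => if x < a.*2 then natf s x else a.*2 + natf t (x - a.*2)).

(* deletion of the rightmost edge {f L, L}, L = 2n-1 the last position,
   followed by standardization; a matching of order n.-1 (junk if n = 0) *)
Definition del_last (n : nat) (f : mfun n) : mfun n.-1 :=
  let r := natf f (n.*2).-1 in
  mkf _ (fun x => unbump r (natf f (bump r x))).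

Definition Mset (n k : nat) (s : mfun k) : {set mfun n} :=
  [set f : mfun n | is_matching f && ~~ contains s f].

(* mu_l(sigma): matchings of order l minimally containing sigma.  For l = 0
   there is no rightmost edge; the empty matching is taken to minimally
   contain sigma iff it contains sigma. *)
Definition mu (l k : nat) (s : mfun k) : {set mfun l} :=
  [set f : mfun l | [&& is_matching f, contains s f &
                        ((l == 0) || ~~ contains s (del_last f))]].

From mathcomp Require Import all_boot fingroup perm zify.
From Stdlib Require Import Classical.
Set Implicit Arguments. Unset Strict Implicit. Unset Printing Implicit Defensive.

(* A matching f avoiding sigma(tau + |sigma|) either avoids sigma,
   or contains it; in the latter case cut f at the least position c such that
   sigma embeds into the edges lying entirely before c.  If k edges cross the
   cut, then c = 2l + k where l edges lie before it; these standardize to a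
   matching of order l minimally containing sigma (by minimality of c, position
   c - 1 closes one of them, which is thus the rightmost edge), and the edges
   after the cut standardize to a matching avoiding tau, as otherwise
   sigma(tau + |sigma|) would embed.  Conversely f is glued back uniquely from
   these two matchings, the left ends of the crossing edges (k of the first
   c - 1 positions), their right ends (k of the last 2n - c positions) and the
   bijection between them, whence the factor
   C(2l+k-1, k) C(2n-2l-k, k) k! |mu_l(sigma)| |M_(n-l-k)(tau)|. *)

Lemma natf_val N (f : {ffun 'I_N -> 'I_N}) (i : 'I_N) : natf f i = f i.
Proof. by rewrite /natf valK. Qed.

Lemma natf_lt N (f : {ffun 'I_N -> 'I_N}) x : x < N -> natf f x < N.
Proof. by move=> lx; rewrite /natf insubT /=. Qed.

Lemma natf_mkf N g x : x < N -> g x < N -> natf (mkf N g) x = g x.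
Proof. by move=> lx lg; rewrite /natf insubT /= /mkf ffunE /= /insubd insubT. Qed.

Lemma natf_inj N (f g : {ffun 'I_N -> 'I_N}) :
  (forall x, x < N -> natf f x = natf g x) -> f = g.
Proof. by move=> h; apply/ffunP => i; apply/val_inj; rewrite /= -!natf_val h. Qed.

Definition nat_matching N (F : nat -> nat) :=
  forall x, x < N -> [/\ F x < N, F (F x) = x & F x <> x].

Lemma matchingP n (f : mfun n) :
  reflect (nat_matching n.*2 (natf f)) (is_matching f).
Proof.
apply: (iffP forallP) => [h x lx | h i].
  have /andP[/eqP ff /eqP fx] := h (Ordinal lx).
  have -> : natf f x = f (Ordinal lx) by rewrite -natf_val.
  split=> //; first by rewrite natf_val ff.
  by move=> e; apply: fx; apply: val_inj.
have [_ ff fx] := h _ (ltn_ord i).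
apply/andP; split; apply/eqP; first by apply: val_inj; rewrite /= -!natf_val.
by move=> e; apply: fx; rewrite natf_val e.
Qed.

Definition is_emb K M (S T : nat -> nat) (e : nat -> nat) :=
  [/\ forall p, p < K -> e p < M,
      forall p q, p < q -> q < K -> e p < e q &
      forall p q, p < K -> q < K -> (T (e p) = e q <-> S p = q)].

Definition emb_within K M S T (P : nat -> Prop) :=
  exists e, is_emb K M S T e /\ forall p, p < K -> P (e p).

Lemma containsP k m (s : mfun k) (t : mfun m) :
  reflect (exists e, is_emb k.*2 m.*2 (natf s) (natf t) e) (contains s t).
Proof.
apply: (iffP existsP) => [[e /forallP he] | [e [e_lt e_mono e_edge]]].
  pose e' p := oapp (fun i : 'I_(k.*2) => val (e i)) 0 (insub p).
  have e'E (i : 'I_(k.*2)) : e' i = e i by rewrite /e' valK.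
  have heP (p q : 'I_(k.*2)) : (p < q -> e p < e q) /\ (t (e p) == e q) = (s p == q).
    by have /forallP/(_ q)/andP[/implyP ? /eqP ?] := he p.
  exists e'; split.
  - by move=> p lp; rewrite (_ : p = Ordinal lp) // e'E.
  - move=> p q lpq lq; have lp := ltn_trans lpq lq.
    rewrite (_ : p = Ordinal lp) // (_ : q = Ordinal lq) // !e'E.
    by have [H _] := heP (Ordinal lp) (Ordinal lq); apply: H.
  - move=> p q lp lq.
    rewrite (_ : p = Ordinal lp) // (_ : q = Ordinal lq) // !e'E !natf_val.
    have [_ H] := heP (Ordinal lp) (Ordinal lq).
    by split=> /val_inj/eqP; [rewrite H | rewrite -H] => /eqP ->.
exists [ffun p : 'I_(k.*2) => Ordinal (e_lt _ (ltn_ord p))].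
apply/forallP => p; apply/forallP => q; rewrite !ffunE /=.
apply/andP; split; first by apply/implyP => lpq; apply: e_mono.
set ep := Ordinal _; set eq := Ordinal _.
have := e_edge p q (ltn_ord p) (ltn_ord q).
rewrite -[e p]/(val ep) -[e q]/(val eq) !natf_val => H.
by apply/eqP; apply/eqP/eqP => E; apply/val_inj/H; rewrite E.
Qed.

Lemma contains_emb_within k m (s : mfun k) (t : mfun m) :
  contains s t <-> emb_within k.*2 m.*2 (natf s) (natf t) (fun _ => True).
Proof.
split=> [/containsP [e he] | [e [he _]]]; last by apply/containsP; exists e.
by exists e.
Qed.

Lemma emb_within_mono_in K M S T (P Q : nat -> Prop) :
  (forall x, x < M -> P x -> Q x) -> emb_within K M S T P -> emb_within K M S T Q.
Proof.
move=> PQ [e [[e_lt ? ?] eP]]; exists e; split=> // p lp.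
by apply: PQ; [apply: e_lt | apply: eP].
Qed.

Lemma emb_within_mono K M S T (P Q : nat -> Prop) :
  (forall x, P x -> Q x) -> emb_within K M S T P -> emb_within K M S T Q.
Proof. by move=> PQ; apply: emb_within_mono_in => x _; apply: PQ. Qed.

Lemma emb_within_ext K M S S' T T' P :
  (forall p, p < K -> S p = S' p) -> (forall x, x < M -> T x = T' x) ->
  emb_within K M S T P -> emb_within K M S' T' P.
Proof.
move=> SS' TT' [e [[e_lt e_mono e_edge] eP]]; exists e; split=> //.
by split=> // p q lp lq; rewrite -TT' ?e_lt // -SS' //; apply: e_edge.
Qed.

Lemma emb_within_size K M S T (P : nat -> Prop) (X : seq nat) :
  emb_within K M S T P -> (forall x, P x -> x \in X) -> K <= size X.
Proof.
move=> [e [[_ e_mono _] eP]] PX.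
rewrite -(size_iota 0 K) -(size_map e); apply: uniq_leq_size.
  rewrite map_inj_in_uniq ?iota_uniq // => p q; rewrite !mem_iota !add0n => lp lq E.
  by case: (ltngtP p q) => // h; [have := e_mono p q h lq | have := e_mono q p h lp]; lia.
by move=> y /mapP [p]; rewrite mem_iota add0n => /andP[_ lp] ->; apply/PX/eP.
Qed.

(* [restr F X] is [F] restricted to the [F]-closed sorted list [X] and
   standardized, positions being replaced by their ranks in [X]. *)
Definition restr (F : nat -> nat) (X : seq nat) (i : nat) := index (F (nth 0 X i)) X.

Lemma ltn_sorted_uniq (X : seq nat) : sorted ltn X -> uniq X.
Proof. by rewrite ltn_sorted_uniq_leq => /andP[]. Qed.

Lemma ltn_sorted_nth (X : seq nat) i j :
  sorted ltn X -> i < j -> j < size X -> nth 0 X i < nth 0 X j.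
Proof.
move=> sX lij ljs; apply: (sorted_ltn_nth ltn_trans) => //.
by rewrite inE (ltn_trans lij).
Qed.

Lemma ltn_sorted_index (X : seq nat) x y :
  sorted ltn X -> x \in X -> y \in X -> x < y -> index x X < index y X.
Proof.
move=> sX xX yX lxy; rewrite ltnNge leq_eqVlt; apply/negP => /orP[/eqP E | lt].
  by move: lxy; rewrite -(nth_index 0 xX) -(nth_index 0 yX) E ltnn.
have := ltn_sorted_nth sX lt; rewrite index_mem !nth_index // => /(_ xX).
by move/(ltn_trans lxy); rewrite ltnn.
Qed.

Lemma emb_within_restr (F : nat -> nat) (X : seq nat) M K S (P : nat -> Prop) :
  sorted ltn X -> (forall x, x \in X -> x < M) ->
  (forall x, x \in X -> F x \in X) ->
  emb_within K (size X) S (restr F X) P <->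
  emb_within K M S F (fun x => x \in X /\ P (index x X)).
Proof.
move=> sX XM XF; have uX := ltn_sorted_uniq sX.
split=> [[e [[e_lt e_mono e_edge] eP]] | [e [[e_lt e_mono e_edge] eP]]].
  have eX p : p < K -> nth 0 X (e p) \in X by move/e_lt; apply: mem_nth.
  exists (fun p => nth 0 X (e p)); split; last first.
    by move=> p lp; rewrite index_uniq ?e_lt //; split; [apply: eX | apply: eP].
  split.
  - by move=> p /eX /XM.
  - by move=> p q lpq lq; apply: ltn_sorted_nth; [| apply: e_mono | apply: e_lt].
  - move=> p q lp lq; rewrite -e_edge // /restr.
    split=> [-> | <-]; first by rewrite index_uniq ?e_lt.
    by rewrite nth_index ?XF ?eX.
have eX p : p < K -> e p \in X by case/eP.
exists (fun p => index (e p) X); split; last by move=> p /eP [].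
split.
- by move=> p /eX; rewrite index_mem.
- by move=> p q lpq lq; apply: ltn_sorted_index; rewrite ?eX ?e_mono // (ltn_trans lpq).
- move=> p q lp lq; rewrite -e_edge // /restr nth_index ?eX //.
  split=> [E | ->] //.
  by rewrite -(nth_index 0 (eX q lq)) -E nth_index ?XF ?eX.
Qed.

Section Cut.
Variables (N : nat) (F : nat -> nat).
Hypothesis HF : nat_matching N F.

Definition closed_left c := [seq i <- iota 0 c | F i < c].
Definition open_left c := [seq i <- iota 0 c | c <= F i].
Definition closed_right c := [seq i <- iota c (N - c) | c <= F i].
Definition open_right c := [seq i <- iota c (N - c) | F i < c].

Lemma mem_closed_left c (x : nat) : (x \in closed_left c) = (x < c) && (F x < c).
Proof. by rewrite mem_filter mem_iota andbC. Qed.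

Lemma mem_open_left c (x : nat) : (x \in open_left c) = (x < c) && (c <= F x).
Proof. by rewrite mem_filter mem_iota andbC. Qed.

Lemma mem_closed_right c (x : nat) :
  c <= N -> (x \in closed_right c) = [&& c <= x, x < N & c <= F x].
Proof. by move=> cN; rewrite mem_filter mem_iota subnKC // andbC andbA. Qed.

Lemma mem_open_right c (x : nat) :
  c <= N -> (x \in open_right c) = [&& c <= x, x < N & F x < c].
Proof. by move=> cN; rewrite mem_filter mem_iota subnKC // andbC andbA. Qed.

Lemma sorted_closed_left c : sorted ltn (closed_left c).
Proof. exact/sorted_filter/iota_ltn_sorted/ltn_trans. Qed.

Lemma sorted_open_left c : sorted ltn (open_left c).
Proof. exact/sorted_filter/iota_ltn_sorted/ltn_trans. Qed.

Lemma sorted_closed_right c : sorted ltn (closed_right c).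
Proof. exact/sorted_filter/iota_ltn_sorted/ltn_trans. Qed.

Lemma sorted_open_right c : sorted ltn (open_right c).
Proof. exact/sorted_filter/iota_ltn_sorted/ltn_trans. Qed.

Lemma size_left c : size (closed_left c) + size (open_left c) = c.
Proof.
rewrite !size_filter -[c in RHS](size_iota 0) -(count_predC (fun i => F i < c)).
by congr (_ + _); apply: eq_count => i /=; rewrite -leqNgt.
Qed.

Lemma size_right c : size (closed_right c) + size (open_right c) = N - c.
Proof.
rewrite !size_filter -[N - c in RHS](size_iota c) -(count_predC (fun i => c <= F i)).
by congr (_ + _); apply: eq_count => i /=; rewrite ltnNge.
Qed.

Lemma closed_left_lt c (x : nat) : c <= N -> x \in closed_left c -> x < N.
Proof. by move=> cN; rewrite mem_closed_left => /andP[xc _]; apply: leq_trans cN. Qed.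

Lemma closed_right_lt c (x : nat) : c <= N -> x \in closed_right c -> x < N.
Proof. by move=> cN; rewrite mem_closed_right // => /and3P[]. Qed.

Lemma closed_left_stable c (x : nat) : c <= N -> x \in closed_left c -> F x \in closed_left c.
Proof.
move=> cN; rewrite !mem_closed_left => /andP[xc Fxc].
by have [_ -> _] := HF (leq_trans xc cN); rewrite Fxc xc.
Qed.

Lemma closed_right_stable c (x : nat) :
  c <= N -> x \in closed_right c -> F x \in closed_right c.
Proof.
move=> cN; rewrite !mem_closed_right // => /and3P[cx xN cFx].
by have [FN -> _] := HF xN; rewrite cFx FN cx.
Qed.

Lemma open_left_to_right c (x : nat) : c <= N -> x \in open_left c -> F x \in open_right c.
Proof.
move=> cN; rewrite mem_open_left mem_open_right // => /andP[xc cF].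
by have [FN -> _] := HF (leq_trans xc cN); rewrite cF FN xc.
Qed.

Lemma open_right_to_left c (x : nat) : c <= N -> x \in open_right c -> F x \in open_left c.
Proof.
move=> cN; rewrite mem_open_left mem_open_right // => /and3P[cx xN Fc].
by have [FN -> _] := HF xN; rewrite Fc cx.
Qed.

Lemma nat_matching_inj_in (X : seq nat) :
  (forall x, x \in X -> x < N) -> {in X &, injective F}.
Proof.
move=> XN x y xX yX E.
by have [_ ex _] := HF (XN _ xX); have [_ ey _] := HF (XN _ yX); rewrite -ex E ey.
Qed.

Lemma size_map_leq (X Y : seq nat) :
  uniq X -> (forall x, x \in X -> x < N) -> (forall x, x \in X -> F x \in Y) ->
  size X <= size Y.
Proof.
move=> uX XN XY; rewrite -(size_map F); apply: uniq_leq_size => [|_ /mapP[x xX ->]].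
  by rewrite map_inj_in_uniq //; apply: nat_matching_inj_in.
exact: XY.
Qed.

Lemma size_open c : c <= N -> size (open_left c) = size (open_right c).
Proof.
move=> cN; apply/eqP; rewrite eqn_leq !size_map_leq ?ltn_sorted_uniq //.
- exact: sorted_open_right.
- by move=> x; rewrite mem_open_right // => /and3P[].
- by move=> x; apply: open_right_to_left.
- exact: sorted_open_left.
- by move=> x; rewrite mem_open_left => /andP[xc _]; apply: leq_trans cN.
- by move=> x; apply: open_left_to_right.
Qed.

(* [F] exchanges the positions of [X] below their partner with those above. *)
Lemma stable_size_even (X : seq nat) : uniq X -> (forall x : nat, x \in X -> x < N) ->
  (forall x, x \in X -> F x \in X) -> ~~ odd (size X).
Proof.
move=> uX XN XF.
set lo := [seq x <- X | x < F x]; set hi := [seq x <- X | F x < x].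
have size_lohi : size X = size lo + size hi.
  rewrite !size_filter -(count_predC (fun x => x < F x)); congr (_ + _).
  apply: eq_in_count => x xX /=; have [_ _ ne] := HF (XN _ xX).
  by rewrite -leqNgt leq_eqVlt; case: eqVneq.
have swap (cmp : rel nat) :
    size [seq x <- X | cmp x (F x)] <= size [seq x <- X | cmp (F x) x].
  apply: size_map_leq; rewrite ?filter_uniq //.
    by move=> x; rewrite mem_filter => /andP[_ /XN].
  move=> x; rewrite !mem_filter => /andP[lt xX].
  by have [_ -> _] := HF (XN _ xX); rewrite lt XF.
have size_hilo : size hi = size lo.
  by apply/eqP; rewrite eqn_leq; apply/andP; split; [exact: (swap [rel x y | y < x]) | exact: (swap ltn)].
by rewrite size_lohi size_hilo addnn odd_double.
Qed.

End Cut.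

Definition restrict m n (f : mfun n) (X : seq nat) : mfun m :=
  mkf (m.*2) (restr (natf f) X).

Section Restrict.
Variables (m n : nat) (f : mfun n) (X : seq nat).
Hypothesis sX : sorted ltn X.
Hypothesis sizeX : size X = m.*2.
Hypothesis XN : forall x : nat, x \in X -> x < n.*2.
Hypothesis XF : forall x : nat, x \in X -> natf f x \in X.

Lemma natf_restrict x : x < m.*2 -> natf (restrict m f X) x = restr (natf f) X x.
Proof.
move=> lx; rewrite natf_mkf // /restr -sizeX index_mem; apply: XF.
by rewrite mem_nth // sizeX.
Qed.

Lemma restrict_matching : is_matching f -> is_matching (restrict m f X).
Proof.
move=> /matchingP HF; apply/matchingP => x lx.
have uX := ltn_sorted_uniq sX.
have xX : nth 0 X x \in X by rewrite mem_nth // sizeX.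
have FxX := XF xX.
have restr_lt : restr (natf f) X x < m.*2 by rewrite /restr -sizeX index_mem.
rewrite !natf_restrict //; split=> //.
  rewrite /restr nth_index //.
  by have [_ -> _] := HF _ (XN xX); rewrite index_uniq // sizeX.
move=> /(congr1 (nth 0 X)); rewrite /restr nth_index //.
by have [_ _ ne] := HF _ (XN xX).
Qed.

Lemma contains_restrict k (s : mfun k) :
  contains s (restrict m f X) <->
  emb_within k.*2 n.*2 (natf s) (natf f) (fun x => x \in X).
Proof.
rewrite contains_emb_within.
have E x : x < m.*2 -> natf (restrict m f X) x = restr (natf f) X x.
  exact: natf_restrict.
have restrE := emb_within_restr k.*2 (natf s) (fun _ => True) sX XN XF.
split=> H.
  have /restrE : emb_within k.*2 (size X) (natf s) (restr (natf f) X) (fun _ => True).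
    by rewrite sizeX; apply: emb_within_ext H.
  by apply: emb_within_mono => x [].
have : emb_within k.*2 (size X) (natf s) (restr (natf f) X) (fun _ => True).
  by apply/restrE; move: H; apply: emb_within_mono.
by rewrite sizeX; apply: emb_within_ext => // x /E ->.
Qed.

End Restrict.

Definition emb_before k n (s : mfun k) (f : mfun n) c :=
  emb_within k.*2 n.*2 (natf s) (natf f) (fun x => x < c /\ natf f x < c).

Definition emb_after k n (t : mfun k) (f : mfun n) c :=
  emb_within k.*2 n.*2 (natf t) (natf f) (fun x => c <= x /\ c <= natf f x).

Lemma emb_before_mono k n (s : mfun k) (f : mfun n) c1 c2 :
  c1 <= c2 -> emb_before s f c1 -> emb_before s f c2.
Proof. by move=> c12; apply: emb_within_mono => x [? ?]; split; apply: leq_trans c12. Qed.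

Lemma emb_after_mono k n (t : mfun k) (f : mfun n) c1 c2 :
  c1 <= c2 -> emb_after t f c2 -> emb_after t f c1.
Proof. by move=> c12; apply: emb_within_mono => x [? ?]; split; apply: leq_trans c12 _. Qed.

Section Juxt.
Variables (a b n : nat) (s : mfun a) (t : mfun b) (f : mfun n).
Hypotheses (Hs : is_matching s) (Ht : is_matching t).

Lemma natf_juxt x : x < (a + b).*2 ->
  natf (juxt s t) x = if x < a.*2 then natf s x else a.*2 + natf t (x - a.*2).
Proof.
move=> lx; rewrite natf_mkf //; case: ifP => h; rewrite doubleD in lx *.
  by apply: leq_trans (natf_lt _ h) (leq_addr _ _).
by rewrite ltn_add2l natf_lt // ltn_subLR // leqNgt h.
Qed.

(* The cut is placed just after the image of the last position of [s]. *)
Lemma juxt_emb_split :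
  contains (juxt s t) f -> exists c, emb_before s f c /\ emb_after t f c.
Proof.
have /matchingP HS := Hs; have /matchingP HT := Ht.
move/containsP => [e [e_lt e_mono e_edge]].
have e_s p : p < a.*2 -> natf f (e p) = e (natf s p).
  move=> lp; have [lS _ _] := HS p lp.
  by apply/e_edge; rewrite ?natf_juxt ?lp //; lia.
have e_t p : p < b.*2 -> natf f (e (a.*2 + p)) = e (a.*2 + natf t p).
  move=> lp; have [lT _ _] := HT p lp.
  by apply/e_edge; rewrite ?natf_juxt ?ltnNge ?leq_addr ?addKn //; lia.
have e_le p q : p <= q -> q < (a + b).*2 -> e p <= e q.
  by rewrite leq_eqVlt => /orP[/eqP -> // | lpq] lq; apply/ltnW/e_mono.
exists (if a.*2 == 0 then 0 else (e (a.*2).-1).+1); split.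
  exists e; split.
    split=> [p lp | p q lpq lq | p q lp lq]; first (by apply: e_lt; lia);
      first (by apply: e_mono; lia).
    by rewrite e_edge ?natf_juxt ?lp //; lia.
  move=> p lp; have -> : (a.*2 == 0) = false by lia.
  rewrite e_s // !ltnS; have [lS _ _] := HS p lp.
  by split; apply: e_le; lia.
exists (fun p => e (a.*2 + p)); split.
  split=> [p lp | p q lpq lq | p q lp lq]; first (by apply: e_lt; lia);
    first (by apply: e_mono; lia).
  by rewrite e_edge ?natf_juxt ?ltnNge ?leq_addr ?addKn //=; lia.
move=> p lp; rewrite e_t //; have [lT _ _] := HT p lp.
by case: eqP => // a0; split; apply: e_mono; lia.
Qed.

Lemma emb_split_juxt c :
  emb_before s f c -> emb_after t f c -> contains (juxt s t) f.
Proof.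
have /matchingP HS := Hs.
move=> [e1 [[e1_lt e1_mono e1_edge] e1P]] [e2 [[e2_lt e2_mono e2_edge] e2P]].
apply/containsP; exists (fun p => if p < a.*2 then e1 p else e2 (p - a.*2)); split.
- by move=> p lp; case: (ltnP p a.*2) => h; [apply: e1_lt | apply: e2_lt]; lia.
- move=> p q lpq lq; case: (ltnP p a.*2) => hp; case: (ltnP q a.*2) => hq.
  + exact: e1_mono.
  + by have [? _] := e1P p hp; have [? _] := e2P (q - a.*2) ltac:(lia); lia.
  + lia.
  + by apply: e2_mono; lia.
- move=> p q lp lq; rewrite natf_juxt //.
  case: (ltnP p a.*2) => hp; case: (ltnP q a.*2) => hq.
  + exact: e1_edge.
  + have [_ ?] := e1P p hp; have [? _] := e2P (q - a.*2) ltac:(lia).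
    by have [? _ _] := HS p hp; split; lia.
  + by have [_ ?] := e2P (p - a.*2) ltac:(lia); have [? _] := e1P q hq; split; lia.
  + have := e2_edge (p - a.*2) (q - a.*2) ltac:(lia) ltac:(lia).
    by move=> H; split=> [/H | E]; [lia | apply/H; lia].
Qed.

Lemma contains_juxtP :
  contains (juxt s t) f <-> exists c, emb_before s f c /\ emb_after t f c.
Proof.
split; first exact: juxt_emb_split.
by move=> [c [Hb Ha]]; apply: emb_split_juxt Hb Ha.
Qed.

Lemma contains_juxt_l : contains (juxt s t) f -> contains s f.
Proof.
move/contains_juxtP => [c [Hb _]].
by apply/contains_emb_within; apply: emb_within_mono Hb.
Qed.

End Juxt.

Lemma Mset_sub_juxt a b n (s : mfun a) (t : mfun b) :
  is_matching s -> is_matching t -> Mset n s \subset Mset n (juxt s t).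
Proof.
move=> Hs Ht; apply/subsetP => f; rewrite !inE => /andP[-> /negP Hns] /=.
by apply/negP => /(contains_juxt_l Hs Ht).
Qed.

Section DelLast.
Variables (l : nat) (f : mfun l).
Hypotheses (l_gt0 : 0 < l) (Hf : is_matching f).

Let r := natf f (l.*2).-1.

(* the positions not covered by the rightmost edge [{r, 2l-1}] *)
Definition kept := [seq bump r i | i <- iota 0 (l.-1).*2].

Lemma last_partner : [/\ r < (l.*2).-1, natf f r = (l.*2).-1 & r != (l.*2).-1].
Proof.
have /matchingP HF := Hf; have [rl rr /eqP rne] := HF (l.*2).-1 ltac:(lia).
by split=> //; lia.
Qed.

Lemma mem_kept x : (x \in kept) = (x < (l.*2).-1) && (x != r).
Proof.
have [rL _ _] := last_partner.
apply/mapP/andP => [[i] | [xl xr]].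
  rewrite mem_iota add0n => /andP[_ il] ->; split; last by rewrite eq_sym neq_bump.
  by rewrite /bump; case: (leqP r i) => /= _; lia.
exists (unbump r x); last by rewrite unbumpK // inE.
rewrite mem_iota add0n /=; move: xr; rewrite neq_ltn /unbump.
by case: (ltnP r x) => h /= xr; lia.
Qed.

Lemma sorted_kept : sorted ltn kept.
Proof.
apply: homo_sorted; last exact: iota_ltn_sorted.
by move=> i j /=; rewrite !ltnNge leq_bump2.
Qed.

Lemma size_kept : size kept = (l.-1).*2.
Proof. by rewrite size_map size_iota. Qed.

Lemma kept_lt (y : nat) : y \in kept -> y < l.*2.
Proof. by rewrite mem_kept => /andP[h _]; lia. Qed.

Lemma kept_stable (y : nat) : y \in kept -> natf f y \in kept.
Proof.
have /matchingP HF := Hf; have [rL Fr _] := last_partner.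
rewrite !mem_kept => /andP[yl yr]; have [Fl FF _] := HF y ltac:(lia).
have Fyr : natf f y != r.
  by apply: contraTneq yl => E; rewrite -FF E Fr ltnn.
have FyL : natf f y != (l.*2).-1.
  by apply: contraNneq yr => E; rewrite -FF E.
by rewrite Fyr andbT; lia.
Qed.

Lemma nth_kept i : i < (l.-1).*2 -> nth 0 kept i = bump r i.
Proof. by move=> il; rewrite (nth_map 0) ?size_iota // nth_iota. Qed.

Lemma index_kept (y : nat) : y \in kept -> index y kept = unbump r y.
Proof.
have [rL _ _] := last_partner.
move=> yk; have /andP[yL yr] : (y < (l.*2).-1) && (y != r) by rewrite -mem_kept.
have ul : unbump r y < (l.-1).*2.
  by move: yr; rewrite neq_ltn /unbump; case: (ltnP r y) => /= ry yr; lia.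
have yE : bump r (unbump r y) = y by rewrite unbumpK // inE.
rewrite -{1}yE -nth_kept //.
by rewrite index_uniq ?size_kept ?ltn_sorted_uniq ?sorted_kept.
Qed.

Lemma del_last_restrict : del_last f = restrict l.-1 f kept.
Proof.
apply: natf_inj => x lx.
have xk : bump r x \in kept by rewrite -nth_kept // mem_nth ?size_kept.
have zk := kept_stable xk.
rewrite (natf_restrict size_kept kept_stable lx).
rewrite /restr nth_kept // index_kept // /del_last natf_mkf //.
by rewrite -index_kept // -size_kept index_mem.
Qed.

Lemma contains_del_last k (s : mfun k) :
  contains s (del_last f) <->
  emb_within k.*2 l.*2 (natf s) (natf f) (fun x => x < (l.*2).-1 /\ x != r).
Proof.
rewrite del_last_restrict (contains_restrict sorted_kept size_kept kept_lt kept_stable).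
by split; apply: emb_within_mono => x; rewrite mem_kept => /andP.
Qed.

End DelLast.

Section ClosedLeft.
Variables (n : nat) (f : mfun n).
Hypothesis Hf : is_matching f.
Local Notation F := (natf f).

Lemma restrict_closed_left_matching l c :
  c <= n.*2 -> size (closed_left F c) = l.*2 ->
  is_matching (restrict l f (closed_left F c)).
Proof.
move=> cN sz; have /matchingP HF := Hf.
apply: (restrict_matching (sorted_closed_left F c) sz _ _ Hf) => x.
  exact: closed_left_lt cN.
by move=> xX; exact: (closed_left_stable HF cN xX).
Qed.

Lemma restrict_closed_right_matching m c :
  c <= n.*2 -> size (closed_right n.*2 F c) = m.*2 ->
  is_matching (restrict m f (closed_right n.*2 F c)).
Proof.
move=> cN sz; have /matchingP HF := Hf.
apply: (restrict_matching (sorted_closed_right _ F c) sz _ _ Hf) => x.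
  exact: closed_right_lt cN.
by move=> xX; exact: (closed_right_stable HF cN xX).
Qed.

Lemma contains_closed_left k (s : mfun k) l c :
  c <= n.*2 -> size (closed_left F c) = l.*2 ->
  contains s (restrict l f (closed_left F c)) <-> emb_before s f c.
Proof.
move=> cN sz; have /matchingP HF := Hf.
rewrite (contains_restrict (sorted_closed_left _ _) sz (fun x => closed_left_lt cN)
           (fun x => closed_left_stable HF cN)).
by split; apply: emb_within_mono => x; rewrite mem_closed_left => /andP.
Qed.

Lemma contains_closed_right k (t : mfun k) m c :
  c <= n.*2 -> size (closed_right n.*2 F c) = m.*2 ->
  contains t (restrict m f (closed_right n.*2 F c)) <-> emb_after t f c.
Proof.
move=> cN sz; have /matchingP HF := Hf.
rewrite (contains_restrict (sorted_closed_right _ _ _) sz (fun x => closed_right_lt cN)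
           (fun x => closed_right_stable HF cN)).
split; apply: emb_within_mono_in => x xN; rewrite mem_closed_right //.
  by case/and3P.
by move=> [-> ->]; rewrite xN.
Qed.

Section LastClosed.
Variables (l c : nat).
Hypotheses (l_gt0 : 0 < l) (cN : c <= n.*2) (size_cl : size (closed_left F c) = l.*2).
Hypothesis last_closed : F c.-1 < c.
Local Notation X := (closed_left F c).

Lemma closed_left_rcons : X = rcons [seq i <- iota 0 c.-1 | F i < c] c.-1.
Proof.
have c_gt0 : 0 < c by case: c size_cl => //; rewrite /closed_left /=; lia.
rewrite /closed_left; have -> : iota 0 c = rcons (iota 0 c.-1) c.-1.
  by rewrite -cats1 -{1}(prednK c_gt0) -addn1 iotaD add0n.
by rewrite filter_rcons last_closed.
Qed.

Lemma nth_closed_left_last : nth 0 X (l.*2).-1 = c.-1.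
Proof.
have sz : size [seq i <- iota 0 c.-1 | F i < c] = (l.*2).-1.
  by move: size_cl; rewrite closed_left_rcons size_rcons => <-.
by rewrite closed_left_rcons nth_rcons sz ltnn eqxx.
Qed.

Lemma closed_left_del_last x : x < n.*2 ->
  (x \in X /\ (index x X < (l.*2).-1 /\ index x X != restr F X (l.*2).-1)) <->
  (x < c.-1 /\ F x < c.-1).
Proof.
have /matchingP HF := Hf.
have c_gt0 : 0 < c by case: c size_cl => //; rewrite /closed_left /=; lia.
move=> xN; rewrite /restr nth_closed_left_last.
have [_ FFx _] := HF x xN; have [_ FFc _] := HF c.-1 ltac:(lia).
have uX := ltn_sorted_uniq (sorted_closed_left F c).
have c1X : c.-1 \in X by rewrite mem_closed_left last_closed; lia.
have FcX : F c.-1 \in X by rewrite mem_closed_left last_closed FFc; lia.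
have index_c1 : index c.-1 X = (l.*2).-1.
  by rewrite -nth_closed_left_last index_uniq ?size_cl //; lia.
have index_eq y z : y \in X -> z \in X -> (index y X == index z X) = (y == z).
  by move=> yX zX; rewrite (inj_in_eq (@index_inj _ 0 X)).  
split=> [[xX [xL xFc]] | [xc Fxc]].
  have xc1 : x != c.-1 by rewrite -index_eq // index_c1 ltn_eqF.
  have Fxc1 : F x != c.-1 by apply: contra xFc => /eqP <-; rewrite FFx.
  by move: xX; rewrite mem_closed_left => /andP[xc Fxc]; split; lia.
have xX : x \in X by rewrite mem_closed_left; apply/andP; split; lia.
split=> //; split; first by rewrite -index_c1 ltn_sorted_index ?sorted_closed_left.
by rewrite index_eq //; apply: contraTneq Fxc => ->; rewrite FFc ltnn.
Qed.

Lemma contains_del_last_closed_left k (s : mfun k) :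
  contains s (del_last (restrict l f X)) <-> emb_before s f c.-1.
Proof.
have /matchingP HF := Hf.
have sX := sorted_closed_left F c.
have XN (x : nat) : x \in X -> x < n.*2 by move=> xX; exact: (closed_left_lt cN xX).
have XF (x : nat) : x \in X -> F x \in X by move=> xX; exact: (closed_left_stable HF cN xX).
have Hg := restrict_closed_left_matching cN size_cl.
have g_edge x : x < l.*2 -> natf (restrict l f X) x = restr F X x.
  exact: natf_restrict.
have restrE := emb_within_restr k.*2 (natf s)
  (fun x => x < (l.*2).-1 /\ x != restr F X (l.*2).-1) sX XN XF.
rewrite (contains_del_last l_gt0 Hg) g_edge; last lia.
split=> H.
  have /restrE : emb_within k.*2 (size X) (natf s) (restr F X)
      (fun x => x < (l.*2).-1 /\ x != restr F X (l.*2).-1).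
    by rewrite size_cl; apply: emb_within_ext H => // x /g_edge.
  by apply: emb_within_mono_in => x xN /(closed_left_del_last xN).
have : emb_within k.*2 (size X) (natf s) (restr F X)
    (fun x => x < (l.*2).-1 /\ x != restr F X (l.*2).-1).
  by apply/restrE; move: H; apply: emb_within_mono_in => x xN /(closed_left_del_last xN).
by rewrite size_cl; apply: emb_within_ext => // x /g_edge ->.
Qed.

End LastClosed.
End ClosedLeft.

(* The matchings of order [n] with [k] edges crossing the cut [c = 2l + k],
   none of them starting at [c - 1], whose standardized parts left and right
   of the cut lie in [P] and [Q]. *)
Definition cut_set n l k m (P : {set mfun l}) (Q : {set mfun m}) : {set mfun n} :=
  [set f : mfun n | [&& is_matching f, size (open_left (natf f) (l.*2 + k)) == k,
    (l.*2 + k == 0) || (natf f (l.*2 + k).-1 < l.*2 + k),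
    restrict l f (closed_left (natf f) (l.*2 + k)) \in P &
    restrict m f (closed_right n.*2 (natf f) (l.*2 + k)) \in Q]].
Arguments cut_set : clear implicits.

Lemma ex_least (P : nat -> Prop) N : P N -> exists c, P c /\ forall c', c' < c -> ~ P c'.
Proof.
elim: N {-2}N (leqnn N) => [|N IH] m lm Pm.
  by exists m; split => // c'; move: lm; rewrite leqn0 => /eqP ->.
case: (classic (exists c', c' < m /\ P c')) => [[c' [lc Pc]] | H].
  by apply: (IH c') => //; lia.
by exists m; split => // c' lc Pc; apply: H; exists c'.
Qed.

Section Decomposition.
Variables (a b n : nat) (s : mfun a) (t : mfun b).
Hypotheses (Hs : is_matching s) (Ht : is_matching t).

Local Notation cut l k := (cut_set n l k (n - l - k) (mu l s) (Mset (n - l - k) t)).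

Section Fixed.
Variable f : mfun n.
Hypothesis Hf : is_matching f.
Local Notation F := (natf f).

Lemma size_cut_parts l k : l + k <= n -> size (open_left F (l.*2 + k)) = k ->
  size (closed_left F (l.*2 + k)) = l.*2 /\
  size (closed_right n.*2 F (l.*2 + k)) = (n - l - k).*2.
Proof.
have /matchingP HF := Hf; move=> lkn szo.
have := size_left F (l.*2 + k); have := size_right n.*2 F (l.*2 + k).
by rewrite -size_open ?szo //; lia.
Qed.

Lemma mem_mu_closed_left l c : c <= n.*2 -> size (closed_left F c) = l.*2 ->
  c = 0 \/ F c.-1 < c ->
  restrict l f (closed_left F c) \in mu l s <->
  emb_before s f c /\ (l = 0 \/ ~ emb_before s f c.-1).
Proof.
move=> cN szl Hc.
rewrite inE restrict_closed_left_matching //= -(contains_closed_left Hf s cN szl).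
case: (posnP l) => [-> | l_gt0].
  by rewrite /= ?andbT; split=> [-> | [-> _]]; split=> //; left.
have Fc : F c.-1 < c by case: Hc => // c0; move: szl; rewrite c0 /closed_left /=; lia.
rewrite /= -(contains_del_last_closed_left Hf l_gt0 cN szl Fc s).
split=> [/andP[-> /negP nd] | [-> [l0 | nd]]].
- by split=> //; right.
- by rewrite l0 in l_gt0.
- by apply/negP.
Qed.

Lemma mem_Mset_closed_right m c : c <= n.*2 -> size (closed_right n.*2 F c) = m.*2 ->
  restrict m f (closed_right n.*2 F c) \in Mset m t <-> ~ emb_after t f c.
Proof.
move=> cN szr.
rewrite inE restrict_closed_right_matching //= -(contains_closed_right Hf t cN szr).
by split=> /negP.
Qed.

Lemma cut_setP l k : l + k <= n ->
  f \in cut l k <->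
  [/\ size (open_left F (l.*2 + k)) = k,
      l.*2 + k = 0 \/ F (l.*2 + k).-1 < l.*2 + k,
      emb_before s f (l.*2 + k),
      l = 0 \/ ~ emb_before s f (l.*2 + k).-1 &
      ~ emb_after t f (l.*2 + k)].
Proof.
move=> lkn; rewrite inE Hf /=; set c := l.*2 + k.
have cN : c <= n.*2 by rewrite /c; lia.
split=> [/and4P[/eqP szo Hc Hg Hh] | [szo Hc Hb Hl Ha]];
  have [szl szr] := size_cut_parts lkn szo.
  have {}Hc : c = 0 \/ F c.-1 < c by case/orP: Hc => [/eqP|]; [left | right].
  have [Hb Hl] := (mem_mu_closed_left cN szl Hc).1 Hg.
  by split=> //; apply/(mem_Mset_closed_right cN szr).
apply/and4P; split.
- exact/eqP.
- by case: Hc => [-> | ->]; rewrite ?orbT.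
- exact/(mem_mu_closed_left cN szl Hc).
- exact/(mem_Mset_closed_right cN szr).
Qed.

Lemma cut_least l k : l + k <= n -> f \in cut l k ->
  emb_before s f (l.*2 + k) /\ forall c, c < l.*2 + k -> ~ emb_before s f c.
Proof.
move=> lkn /(cut_setP lkn) [szo Hc Hb Hl _]; split=> // c lc.
case: Hl => [l0 | Hl]; last by move=> H; apply: Hl; apply: emb_before_mono H; lia.
exfalso; move: lc szo Hc; rewrite l0 double0 add0n => lc szo [k0 | Fk]; first lia.
have : k.-1 \in closed_left F k by rewrite mem_closed_left Fk andbT; lia.
have /nilP -> // : size (closed_left F k) == 0 by have := size_left F k; rewrite szo; lia.
Qed.

Lemma cut_sub_diff l k : l + k <= n -> f \in cut l k ->
  f \in Mset n (juxt s t) :\: Mset n s.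
Proof.
move=> lkn fS; have [Hb Hmin] := cut_least lkn fS.
have [_ _ _ _ Ha] := (cut_setP lkn).1 fS.
rewrite !inE Hf /= negbK; apply/andP; split.
  by apply/contains_emb_within; apply: emb_within_mono Hb.
apply/negP => /(contains_juxtP f Hs Ht) [c [Hb' Ha']].
case: (ltnP c (l.*2 + k)) => lc; first exact: Hmin lc Hb'.
by apply: Ha; apply: emb_after_mono Ha'.
Qed.

(* If [c - 1] opened a crossing edge, an embedding before [c] would already be
   one before [c - 1]. *)
Lemma least_cut_last_closed c : emb_before s f c ->
  (forall c', c' < c -> ~ emb_before s f c') -> c = 0 \/ F c.-1 < c.
Proof.
have /matchingP HF := Hf; move=> Hb Hmin.
case: (posnP c) => [-> | c_gt0]; [by left | right].
rewrite ltnNge; apply/negP => Fc; apply: (Hmin c.-1); first lia.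
move: Hb; apply: emb_within_mono_in => x xN [xc Fxc].
have [_ FFx _] := HF x xN.
have xc1 : x != c.-1 by apply: contraTneq Fxc => ->; rewrite -leqNgt.
have Fxc1 : F x != c.-1 by apply: contraTneq xc => E; rewrite -FFx E -leqNgt.
by split; lia.
Qed.

Lemma diff_cut : f \in Mset n (juxt s t) :\: Mset n s ->
  exists l k, [/\ a <= l, l + k <= n & f \in cut l k].
Proof.
rewrite !inE Hf /= negbK => /andP[Hcs Hnj]; have /matchingP HF := Hf.
have Hb : emb_before s f n.*2.
  move/contains_emb_within: Hcs; apply: emb_within_mono_in => x xN _.
  by have [? _ _] := HF x xN.
have [c [Hc Hmin]] := ex_least Hb.
have cN : c <= n.*2 by rewrite leqNgt; apply/negP => /Hmin/(_ Hb).
set l := (size (closed_left F c))./2; set k := size (open_left F c).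
have szl : size (closed_left F c) = l.*2.
  rewrite even_halfK //.
  apply: (stable_size_even HF (ltn_sorted_uniq (sorted_closed_left _ _))) => x xX.
    exact: (closed_left_lt cN xX).
  exact: (closed_left_stable HF cN xX).
have cE : c = l.*2 + k by rewrite -szl size_left.
have lkn : l + k <= n.
  by have := size_left F c; have := size_right n.*2 F c; rewrite -size_open //; lia.
exists l, k; split=> //.
  rewrite -leq_double -szl; apply: emb_within_size Hc _ => x [xc Fxc].
  by rewrite mem_closed_left xc Fxc.
apply/(cut_setP lkn); rewrite -cE; split=> //.
- exact: least_cut_last_closed.
- by case: (posnP l) => [-> | l_gt0]; [left | right; apply: Hmin; lia].
- by move=> Ha; move/negP: Hnj; apply; apply/(contains_juxtP f Hs Ht); exists c.
Qed.

Lemma cut_uniq l k l' k' : l + k <= n -> l' + k' <= n ->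
  f \in cut l k -> f \in cut l' k' -> l = l' /\ k = k'.
Proof.
move=> lkn lkn' fS fS'.
have [H1 M1] := cut_least lkn fS; have [H2 M2] := cut_least lkn' fS'.
have cE : l.*2 + k = l'.*2 + k'.
  by case: (ltngtP (l.*2 + k) (l'.*2 + k')) => // lt; [case: (M2 _ lt H1) | case: (M1 _ lt H2)].
have [szo _ _ _ _] := (cut_setP lkn).1 fS; have [szo' _ _ _ _] := (cut_setP lkn').1 fS'.
have kE : k = k' by rewrite -szo -szo' cE.
by split=> //; lia.
Qed.

End Fixed.

Lemma sum_mem_cut (f : mfun n) :
  \sum_(a <= l < n.+1) \sum_(k < (n - l).+1) (f \in cut l k) =
  (f \in Mset n (juxt s t) :\: Mset n s).
Proof.
have in_cut l (k : 'I_(n - l).+1) :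
    l < n.+1 -> f \in cut l k -> is_matching f /\ l + k <= n.
  by move=> ln; rewrite inE => /andP[Hf _]; have := ltn_ord k; split=> //; lia.
case: (boolP (f \in _)) => fD.
  have Hf : is_matching f by move: fD; rewrite !inE => /andP[_ /andP[]].
  have [l0 [k0 [al0 lkn fS]]] := diff_cut Hf fD.
  have l0_in : l0 \in index_iota a n.+1 by rewrite mem_index_iota; lia.
  have lk0 : k0 < (n - l0).+1 by lia.
  rewrite (bigD1_seq l0) ?iota_uniq //=.
  rewrite (bigD1 (Ordinal lk0)) //=.
  rewrite fS big1 => [|k kne]; last first.
    apply/eqP; rewrite eqb0; apply/negP => fS'.
    have [_ lk] := in_cut l0 k ltac:(lia) fS'.
    have [_ E] := cut_uniq Hf lk lkn fS' fS.
    by move: kne; rewrite -val_eqE /= E eqxx.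
  rewrite big1_seq // => l /andP[lne]; rewrite mem_index_iota => /andP[_ ln].
  apply: big1 => k _; apply/eqP; rewrite eqb0; apply/negP => fS'.
  have [_ lk] := in_cut l k ln fS'.
  by have [E _] := cut_uniq Hf lk lkn fS' fS; rewrite E eqxx in lne.
apply: big1_seq => l /andP[_]; rewrite mem_index_iota => /andP[_ ln].
apply: big1 => k _; apply/eqP; rewrite eqb0; apply: contra fD => fS.
by have [Hf lk] := in_cut l k ln fS; apply: cut_sub_diff fS.
Qed.

Lemma card_diff : #|Mset n (juxt s t) :\: Mset n s| =
  \sum_(a <= l < n.+1) \sum_(k < (n - l).+1) #|cut l k|.
Proof.
have card_sum (A : {set mfun n}) : #|A| = \sum_(f : mfun n) (f \in A : nat).
  by rewrite -sum1_card big_mkcond.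
under eq_bigr do under eq_bigr do rewrite card_sum.
under eq_bigr do rewrite exchange_big.
by rewrite exchange_big card_sum; apply: eq_bigr => f _; rewrite sum_mem_cut.
Qed.

End Decomposition.

Definition memn M (U : {set 'I_M}) (i : nat) : bool :=
  oapp (fun j : 'I_M => j \in U) false (insub i).

Lemma memn_val M (U : {set 'I_M}) (j : 'I_M) : memn U j = (j \in U).
Proof. by rewrite /memn valK. Qed.

Lemma memn_lt M (U : {set 'I_M}) i : memn U i -> i < M.
Proof. by rewrite /memn; case: insubP => //= j ->. Qed.

Lemma count_memn M M' (U : {set 'I_M}) : M <= M' -> count (memn U) (iota 0 M') = #|U|.
Proof.
move=> MM'; rewrite -(subnKC MM') iotaD count_cat add0n.
have -> : count (memn U) (iota M (M' - M)) = 0.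
  rewrite (eq_in_count (a2 := pred0)) ?count_pred0 // => i.
  by rewrite mem_iota => /andP[Mi _]; apply/negP => /memn_lt; rewrite ltnNge Mi.
rewrite addn0.
rewrite -val_enum_ord count_map cardE /enum_mem size_filter count_filter.
by apply: eq_count => j /=; rewrite memn_val inE andbT.
Qed.

Lemma count_memn_shift M c (U : {set 'I_M}) :
  count (fun i => memn U (i - c)) (iota c M) = #|U|.
Proof.
rewrite -(addn0 c) iotaDl count_map -(count_memn U (leqnn M)).
by apply: eq_count => i /=; rewrite addn0 addKn.
Qed.

Definition permn k (p : {perm 'I_k}) : nat -> nat := natf [ffun i => p i].

Lemma permn_val k (p : {perm 'I_k}) (j : 'I_k) : permn p j = p j.
Proof. by rewrite /permn natf_val ffunE. Qed.

Lemma permnK k (p : {perm 'I_k}) i : i < k -> permn p^-1 (permn p i) = i.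
Proof. by move=> ik; rewrite -[i]/(val (Ordinal ik)) !permn_val permK. Qed.

Lemma permnKV k (p : {perm 'I_k}) i : i < k -> permn p (permn p^-1 i) = i.
Proof. by move=> ik; rewrite -[i]/(val (Ordinal ik)) !permn_val permKV. Qed.

Lemma nth_index_inv (X Y : seq nat) (phi psi : nat -> nat) (x : nat) :
  uniq Y -> x \in X -> phi (index x X) < size Y -> psi (phi (index x X)) = index x X ->
  nth 0 X (psi (index (nth 0 Y (phi (index x X))) Y)) = x.
Proof. by move=> uY xX lt inv; rewrite index_uniq // inv nth_index. Qed.

Section Glue.
Variables (l k m n : nat).
Hypothesis Hn : n = l + k + m.
Local Notation c := (l.*2 + k).
Local Notation N := n.*2.

(* The crossing edges join the positions [U] (a subset of [0, c - 1)) to the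
   positions [c + V]; the other positions carry standardized copies of [g]
   and [h]. *)
Definition cross_left (U : {set 'I_c.-1}) := [seq i <- iota 0 c | memn U i].
Definition inner_left (U : {set 'I_c.-1}) := [seq i <- iota 0 c | ~~ memn U i].
Definition cross_right (V : {set 'I_(N - c)}) := [seq i <- iota c (N - c) | memn V (i - c)].
Definition inner_right (V : {set 'I_(N - c)}) :=
  [seq i <- iota c (N - c) | ~~ memn V (i - c)].

Definition glue_fun U V (p : {perm 'I_k}) (g : mfun l) (h : mfun m) (x : nat) : nat :=
  if x < c then
    if memn U x then nth 0 (cross_right V) (permn p (index x (cross_left U)))
    else nth 0 (inner_left U) (natf g (index x (inner_left U)))
  else
    if memn V (x - c) then nth 0 (cross_left U) (permn p^-1 (index x (cross_right V)))
    else nth 0 (inner_right V) (natf h (index x (inner_right V))).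

Definition glue U V p g h : mfun n := mkf N (glue_fun U V p g h).

Lemma cross_left_inj : injective cross_left.
Proof.
move=> U1 U2 E; apply/setP => j; rewrite -!memn_val.
have jc : j < c by apply: leq_trans (ltn_ord j) (leq_pred _).
have := congr1 (fun X => val j \in X) E.
by rewrite /= !mem_filter mem_iota add0n jc !andbT.
Qed.

Lemma cross_right_inj : injective cross_right.
Proof.
move=> V1 V2 E; apply/setP => j; rewrite -!memn_val.
have jN : c + j < c + (N - c) by rewrite ltn_add2l.
have := congr1 (fun X => c + val j \in X) E.
by rewrite /= !mem_filter mem_iota addKn leq_addr jN !andbT.
Qed.

Section Fixed.
Variables (U : {set 'I_c.-1}) (V : {set 'I_(N - c)}) (p : {perm 'I_k}).
Variables (g : mfun l) (h : mfun m).
Hypotheses (HU : #|U| = k) (HV : #|V| = k) (Hg : is_matching g) (Hh : is_matching h).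

Local Notation cl := (cross_left U).
Local Notation il := (inner_left U).
Local Notation cr := (cross_right V).
Local Notation ir := (inner_right V).
Local Notation G := (glue_fun U V p g h).

Lemma size_cross_left : size cl = k.
Proof. by rewrite size_filter count_memn //; lia. Qed.

Lemma size_inner_left : size il = l.*2.
Proof.
have : k + size il = c.
  by rewrite -{1}HU -(count_memn U (leq_pred c)) size_filter count_predC size_iota.
lia.
Qed.

Lemma size_cross_right : size cr = k.
Proof. by rewrite size_filter count_memn_shift. Qed.

Lemma size_inner_right : size ir = m.*2.
Proof.
have : k + size ir = N - c.
  by rewrite -{1}HV -(count_memn_shift c V) size_filter count_predC size_iota.
rewrite Hn; lia.
Qed.

Lemma mem_cross_left (x : nat) : (x \in cl) = (x < c) && memn U x.
Proof. by rewrite mem_filter mem_iota andbC. Qed.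

Lemma mem_inner_left (x : nat) : (x \in il) = (x < c) && ~~ memn U x.
Proof. by rewrite mem_filter mem_iota andbC. Qed.

Lemma mem_cross_right (x : nat) : (x \in cr) = [&& c <= x, x < N & memn V (x - c)].
Proof. by rewrite mem_filter mem_iota andbC subnKC -?andbA //; lia. Qed.

Lemma mem_inner_right (x : nat) : (x \in ir) = [&& c <= x, x < N & ~~ memn V (x - c)].
Proof. by rewrite mem_filter mem_iota andbC subnKC -?andbA //; lia. Qed.

Lemma uniq_cross_left : uniq cl. Proof. exact/filter_uniq/iota_uniq. Qed.
Lemma uniq_inner_left : uniq il. Proof. exact/filter_uniq/iota_uniq. Qed.
Lemma uniq_cross_right : uniq cr. Proof. exact/filter_uniq/iota_uniq. Qed.
Lemma uniq_inner_right : uniq ir. Proof. exact/filter_uniq/iota_uniq. Qed.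

Lemma glue_fun_inner_left (x : nat) : x \in il -> G x = nth 0 il (natf g (index x il)).
Proof. by rewrite mem_inner_left /glue_fun => /andP[-> /negbTE ->]. Qed.

Lemma glue_fun_cross_left (x : nat) : x \in cl -> G x = nth 0 cr (permn p (index x cl)).
Proof. by rewrite mem_cross_left /glue_fun => /andP[-> ->]. Qed.

Lemma glue_fun_cross_right (x : nat) :
  x \in cr -> G x = nth 0 cl (permn p^-1 (index x cr)).
Proof. by rewrite mem_cross_right /glue_fun => /and3P[cx _ ->]; rewrite ltnNge cx. Qed.

Lemma glue_fun_inner_right (x : nat) : x \in ir -> G x = nth 0 ir (natf h (index x ir)).
Proof.
by rewrite mem_inner_right /glue_fun => /and3P[cx _ /negbTE ->]; rewrite ltnNge cx.
Qed.

Lemma glue_fun_cases (x : nat) : x < N -> [\/ x \in il, x \in cl, x \in cr | x \in ir].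
Proof.
move=> xN; rewrite mem_inner_left mem_cross_left mem_cross_right mem_inner_right xN.
by case: (ltnP x c) => _ /=; case: (memn _ _); [constructor 2 | constructor 1 | constructor 3 | constructor 4].
Qed.

Lemma glue_fun_inner_left_in (x : nat) : x \in il -> G x \in il.
Proof.
move=> xX; rewrite glue_fun_inner_left // mem_nth // size_inner_left natf_lt //.
by rewrite -size_inner_left index_mem.
Qed.

Lemma glue_fun_cross_left_in (x : nat) : x \in cl -> G x \in cr.
Proof.
move=> xX; rewrite glue_fun_cross_left // mem_nth // size_cross_right /permn natf_lt //.
by rewrite -size_cross_left index_mem.
Qed.

Lemma glue_fun_cross_right_in (x : nat) : x \in cr -> G x \in cl.
Proof.
move=> xX; rewrite glue_fun_cross_right // mem_nth // size_cross_left /permn natf_lt //.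
by rewrite -size_cross_right index_mem.
Qed.

Lemma glue_fun_inner_right_in (x : nat) : x \in ir -> G x \in ir.
Proof.
move=> xX; rewrite glue_fun_inner_right // mem_nth // size_inner_right natf_lt //.
by rewrite -size_inner_right index_mem.
Qed.

Lemma glue_parts_lt (x : nat) : [|| x \in il, x \in cl, x \in cr | x \in ir] -> x < N.
Proof.
rewrite mem_inner_left mem_cross_left mem_cross_right mem_inner_right.
by case/or4P => [/andP[? _] | /andP[? _] | /and3P[] | /and3P[]] //; lia.
Qed.

Lemma glue_fun_lt (x : nat) : x < N -> G x < N.
Proof.
move=> xN; apply: glue_parts_lt.
case: (glue_fun_cases xN) => xX.
- by rewrite glue_fun_inner_left_in.
- by rewrite glue_fun_cross_left_in ?orbT.
- by rewrite glue_fun_cross_right_in ?orbT.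
- by rewrite glue_fun_inner_right_in ?orbT.
Qed.

Lemma glue_funK (x : nat) : x < N -> G (G x) = x.
Proof.
have /matchingP Hg' := Hg; have /matchingP Hh' := Hh.
move=> xN; case: (glue_fun_cases xN) => xX.
- have [lt inv _] := Hg' (index x il) ltac:(by rewrite -size_inner_left index_mem).
  rewrite [G (G x)]glue_fun_inner_left ?glue_fun_inner_left_in // glue_fun_inner_left //.
  by apply: nth_index_inv; rewrite ?uniq_inner_left ?size_inner_left.
- have lt : index x cl < k by rewrite -size_cross_left index_mem.
  rewrite [G (G x)]glue_fun_cross_right ?glue_fun_cross_left_in // glue_fun_cross_left //.
  by apply: nth_index_inv; rewrite ?uniq_cross_right ?size_cross_right ?permnK /permn ?natf_lt.
- have lt : index x cr < k by rewrite -size_cross_right index_mem.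
  rewrite [G (G x)]glue_fun_cross_left ?glue_fun_cross_right_in // glue_fun_cross_right //.
  by apply: nth_index_inv; rewrite ?uniq_cross_left ?size_cross_left ?permnKV /permn ?natf_lt.
- have [lt inv _] := Hh' (index x ir) ltac:(by rewrite -size_inner_right index_mem).
  rewrite [G (G x)]glue_fun_inner_right ?glue_fun_inner_right_in // glue_fun_inner_right //.
  by apply: nth_index_inv; rewrite ?uniq_inner_right ?size_inner_right.
Qed.

Lemma glue_fun_neq (x : nat) : x < N -> G x <> x.
Proof.
have /matchingP Hg' := Hg; have /matchingP Hh' := Hh.
move=> xN; case: (glue_fun_cases xN) => xX.
- have [_ _ ne] := Hg' (index x il) ltac:(by rewrite -size_inner_left index_mem).
  rewrite glue_fun_inner_left // => /(congr1 (index^~ il)).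
  by rewrite index_uniq ?uniq_inner_left // size_inner_left natf_lt // -size_inner_left index_mem.
- move=> E; have := glue_fun_cross_left_in xX; rewrite E.
  by move: xX; rewrite mem_cross_left mem_cross_right => /andP[? _] /andP[? _]; lia.
- move=> E; have := glue_fun_cross_right_in xX; rewrite E.
  by move: xX; rewrite mem_cross_left mem_cross_right => /andP[? _] /andP[? _]; lia.
- have [_ _ ne] := Hh' (index x ir) ltac:(by rewrite -size_inner_right index_mem).
  rewrite glue_fun_inner_right // => /(congr1 (index^~ ir)).
  by rewrite index_uniq ?uniq_inner_right // size_inner_right natf_lt // -size_inner_right index_mem.
Qed.

Lemma natf_glue (x : nat) : x < N -> natf (glue U V p g h) x = G x.
Proof. by move=> xN; rewrite natf_mkf // glue_fun_lt. Qed.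

Lemma glue_matching : is_matching (glue U V p g h).
Proof.
apply/matchingP => x xN; have GxN := glue_fun_lt xN.
by rewrite !natf_glue //; split; [| apply: glue_funK | apply: glue_fun_neq].
Qed.

Local Notation f := (glue U V p g h).

Lemma open_left_glue : open_left (natf f) c = cl.
Proof.
apply: eq_in_filter => i; rewrite mem_iota add0n /= => ic.
rewrite natf_glue; last by rewrite Hn; lia.
case: (boolP (memn U i)) => Ui.
  have /glue_fun_cross_left_in : i \in cl by rewrite mem_cross_left ic.
  by rewrite mem_cross_right => /andP[-> _].
have /glue_fun_inner_left_in : i \in il by rewrite mem_inner_left ic.
by rewrite mem_inner_left => /andP[? _]; apply/negbTE; rewrite -ltnNge.
Qed.

Lemma closed_left_glue : closed_left (natf f) c = il.
Proof.
apply: eq_in_filter => i; rewrite mem_iota add0n /= => ic.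
rewrite natf_glue; last by rewrite Hn; lia.
case: (boolP (memn U i)) => Ui /=.
  have /glue_fun_cross_left_in : i \in cl by rewrite mem_cross_left ic.
  by rewrite mem_cross_right => /andP[? _]; apply/negbTE; rewrite -leqNgt.
have /glue_fun_inner_left_in : i \in il by rewrite mem_inner_left ic.
by rewrite mem_inner_left => /andP[-> _].
Qed.

Lemma open_right_glue : open_right N (natf f) c = cr.
Proof.
apply: eq_in_filter => i; rewrite mem_iota => /andP[ci iN].
have {}iN : i < N by move: iN; rewrite subnKC // Hn; lia.
rewrite natf_glue //; case: (boolP (memn V (i - c))) => Vi /=.
  have /glue_fun_cross_right_in : i \in cr by rewrite mem_cross_right ci iN.
  by rewrite mem_cross_left => /andP[-> _].
have /glue_fun_inner_right_in : i \in ir by rewrite mem_inner_right ci iN.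
by rewrite mem_inner_right => /andP[? _]; apply/negbTE; rewrite -leqNgt.
Qed.

Lemma closed_right_glue : closed_right N (natf f) c = ir.
Proof.
apply: eq_in_filter => i; rewrite mem_iota => /andP[ci iN].
have {}iN : i < N by move: iN; rewrite subnKC // Hn; lia.
rewrite natf_glue //; case: (boolP (memn V (i - c))) => Vi /=.
  have /glue_fun_cross_right_in : i \in cr by rewrite mem_cross_right ci iN.
  by rewrite mem_cross_left => /andP[? _]; apply/negbTE; rewrite -ltnNge.
have /glue_fun_inner_right_in : i \in ir by rewrite mem_inner_right ci iN.
by rewrite mem_inner_right => /andP[-> _].
Qed.

Lemma restrict_closed_left_glue : restrict l f (closed_left (natf f) c) = g.
Proof.
rewrite closed_left_glue; apply: natf_inj => i il_i.
have iX : nth 0 il i \in il by rewrite mem_nth // size_inner_left.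
have ilN y : y \in il -> y < N by move=> yX; apply: glue_parts_lt; rewrite yX.
rewrite natf_restrict ?size_inner_left //; last first.
  by move=> y yX; rewrite natf_glue ?glue_fun_inner_left_in ?ilN.
have ii : index (nth 0 il i) il = i.
  by rewrite index_uniq ?uniq_inner_left ?size_inner_left.
rewrite /restr natf_glue ?ilN // glue_fun_inner_left // ii.
by rewrite index_uniq ?uniq_inner_left // size_inner_left natf_lt.
Qed.

Lemma restrict_closed_right_glue : restrict m f (closed_right N (natf f) c) = h.
Proof.
rewrite closed_right_glue; apply: natf_inj => i ir_i.
have iX : nth 0 ir i \in ir by rewrite mem_nth // size_inner_right.
have irN y : y \in ir -> y < N by move=> yX; apply: glue_parts_lt; rewrite yX !orbT.
rewrite natf_restrict ?size_inner_right //; last first.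
  by move=> y yX; rewrite natf_glue ?glue_fun_inner_right_in ?irN.
have ii : index (nth 0 ir i) ir = i.
  by rewrite index_uniq ?uniq_inner_right ?size_inner_right.
rewrite /restr natf_glue ?irN // glue_fun_inner_right // ii.
by rewrite index_uniq ?uniq_inner_right // size_inner_right natf_lt.
Qed.

Lemma permn_glue i : i < k -> permn p i = index (natf f (nth 0 cl i)) cr.
Proof.
move=> ik; have iX : nth 0 cl i \in cl by rewrite mem_nth // size_cross_left.
have ii : index (nth 0 cl i) cl = i.
  by rewrite index_uniq ?uniq_cross_left ?size_cross_left.
rewrite natf_glue ?glue_parts_lt ?iX ?orbT // glue_fun_cross_left // ii.
by rewrite index_uniq ?uniq_cross_right ?size_cross_right /permn ?natf_lt.
Qed.

Lemma glue_last_closed : (c == 0) || (natf f c.-1 < c).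
Proof.
case: (posnP c) => [-> // | c_gt0]; apply/orP; right.
have c1X : c.-1 \in il.
  by rewrite mem_inner_left; apply/andP; split; [lia | apply/negP => /memn_lt; lia].
rewrite natf_glue ?glue_parts_lt ?c1X //.
by have := glue_fun_inner_left_in c1X; rewrite mem_inner_left => /andP[].
Qed.

Lemma glue_in_cut_set (P : {set mfun l}) (Q : {set mfun m}) :
  g \in P -> h \in Q -> f \in cut_set n l k m P Q.
Proof.
move=> gP hQ; rewrite inE glue_matching open_left_glue size_cross_left eqxx.
by rewrite glue_last_closed restrict_closed_left_glue restrict_closed_right_glue gP hQ.
Qed.

End Fixed.

Lemma glue_inj (U1 U2 : {set 'I_c.-1}) (V1 V2 : {set 'I_(N - c)}) (p1 p2 : {perm 'I_k})
    (g1 g2 : mfun l) (h1 h2 : mfun m) :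
  #|U1| = k -> #|V1| = k -> is_matching g1 -> is_matching h1 ->
  #|U2| = k -> #|V2| = k -> is_matching g2 -> is_matching h2 ->
  glue U1 V1 p1 g1 h1 = glue U2 V2 p2 g2 h2 -> (U1, V1, p1, g1, h1) = (U2, V2, p2, g2, h2).
Proof.
move=> HU1 HV1 Hg1 Hh1 HU2 HV2 Hg2 Hh2 E.
have recover (T : Type) (F : mfun n -> T) (x1 x2 : T) :
    F (glue U1 V1 p1 g1 h1) = x1 -> F (glue U2 V2 p2 g2 h2) = x2 -> x1 = x2.
  by move=> <- <-; rewrite E.
have EU : U1 = U2.
  by apply/cross_left_inj/(recover _ (fun f => open_left (natf f) c)); rewrite open_left_glue.
have EV : V1 = V2.
  by apply/cross_right_inj/(recover _ (fun f => open_right N (natf f) c));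
    rewrite open_right_glue.
have Eg : g1 = g2.
  by apply: (recover _ (fun f => restrict l f (closed_left (natf f) c)));
    rewrite restrict_closed_left_glue.
have Eh : h1 = h2.
  by apply: (recover _ (fun f => restrict m f (closed_right N (natf f) c)));
    rewrite restrict_closed_right_glue.
subst U2 V2 g2 h2; congr (_, _, _, _, _); apply/permP => i; apply: val_inj.
have ik := ltn_ord i.
rewrite /= -!permn_val (permn_glue p1 HU1 HV1 Hg1 Hh1 ik).
by rewrite (permn_glue p2 HU1 HV1 Hg1 Hh1 ik) E.
Qed.

End Glue.

Section Unglue.
Variables (l k m n : nat) (P : {set mfun l}) (Q : {set mfun m}) (f : mfun n).
Hypotheses (Hn : n = l + k + m) (fS : f \in cut_set n l k m P Q).
Local Notation c := (l.*2 + k).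
Local Notation N := n.*2.
Local Notation F := (natf f).

Definition cut_left_ends : {set 'I_c.-1} := [set j : 'I_c.-1 | c <= F j].
Definition cut_right_ends : {set 'I_(N - c)} := [set j : 'I_(N - c) | F (c + j) < c].

Let cN : c <= N. Proof. rewrite Hn; lia. Qed.
Let Hf : is_matching f. Proof. by move: fS; rewrite inE => /andP[]. Qed.
Let HF : nat_matching N F. Proof. exact/matchingP. Qed.
Let size_open_left : size (open_left F c) = k.
Proof. by move: fS; rewrite inE => /and5P[_ /eqP]. Qed.
Let last_closed : 0 < c -> F c.-1 < c.
Proof. by move: fS; rewrite inE => /and5P[_ _ /orP[/eqP -> | //] _ _]. Qed.

Lemma cross_left_ends : cross_left cut_left_ends = open_left F c.
Proof.
apply: eq_in_filter => i; rewrite mem_iota add0n /= => ic.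
rewrite /memn; case: insubP => [j jc1 <- | /negbTE jc1] /=; first by rewrite inE.
have -> : i = c.-1 by lia.
by rewrite leqNgt last_closed //; lia.
Qed.

Lemma inner_left_ends : inner_left cut_left_ends = closed_left F c.
Proof.
apply: eq_in_filter => i; rewrite mem_iota add0n /= => ic.
rewrite /memn; case: insubP => [j jc1 <- | /negbTE jc1] /=; first by rewrite inE -ltnNge.
have -> : i = c.-1 by lia.
by rewrite last_closed //; lia.
Qed.

Lemma cross_right_ends : cross_right cut_right_ends = open_right N F c.
Proof.
apply: eq_in_filter => i; rewrite mem_iota subnKC // => /andP[ci iN].
have ic : i - c < N - c by lia.
by rewrite /memn insubT /= inE subnKC.
Qed.

Lemma inner_right_ends : inner_right cut_right_ends = closed_right N F c.
Proof.
apply: eq_in_filter => i; rewrite mem_iota subnKC // => /andP[ci iN].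
have ic : i - c < N - c by lia.
by rewrite /memn insubT /= inE subnKC // -leqNgt.
Qed.

Lemma card_left_ends : #|cut_left_ends| = k.
Proof.
by rewrite -(count_memn _ (leq_pred c)) -size_filter -[RHS]size_open_left -cross_left_ends.
Qed.

Lemma card_right_ends : #|cut_right_ends| = k.
Proof.
rewrite -(count_memn_shift c) -size_filter -[RHS]size_open_left (size_open HF cN).
by rewrite -cross_right_ends.
Qed.

Lemma size_closed_left_cut : size (closed_left F c) = l.*2.
Proof. by have := size_left F c; rewrite size_open_left; lia. Qed.

Lemma size_closed_right_cut : size (closed_right N F c) = m.*2.
Proof. by have := size_right N F c; rewrite -(size_open HF cN) size_open_left; lia. Qed.

Definition cut_perm_fun (i : 'I_k) : 'I_k :=
  insubd i (index (F (nth 0 (open_left F c) i)) (open_right N F c)).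

Lemma val_cut_perm_fun i :
  val (cut_perm_fun i) = index (F (nth 0 (open_left F c) i)) (open_right N F c).
Proof.
rewrite val_insubd -[X in _ < X]size_open_left (size_open HF cN) index_mem.
by rewrite open_left_to_right // mem_nth ?size_open_left.
Qed.

Lemma cut_perm_fun_inj : injective cut_perm_fun.
Proof.
have oN (x : nat) : x \in open_left F c -> x < N.
  by rewrite mem_open_left => /andP[xc _]; apply: leq_trans cN.
have oX (i : 'I_k) : nth 0 (open_left F c) i \in open_left F c.
  by rewrite mem_nth ?size_open_left.
move=> i j /(congr1 val); rewrite !val_cut_perm_fun.
move/(congr1 (nth 0 (open_right N F c))).
rewrite !nth_index ?(open_left_to_right HF cN (oX _)) //.
move/(nat_matching_inj_in HF oN (oX i) (oX j))/eqP.
by rewrite nth_uniq ?size_open_left ?ltn_sorted_uniq ?sorted_open_left // => /eqP/val_inj.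
Qed.

Definition cut_perm := perm cut_perm_fun_inj.

Lemma permn_cut_perm i : i < k ->
  permn cut_perm i = index (F (nth 0 (open_left F c) i)) (open_right N F c).
Proof. by move=> ik; rewrite -[i]/(val (Ordinal ik)) permn_val permE val_cut_perm_fun. Qed.

Lemma glue_cut :
  glue cut_left_ends cut_right_ends cut_perm
    (restrict l f (closed_left F c)) (restrict m f (closed_right N F c)) = f.
Proof.
have HU := card_left_ends; have HV := card_right_ends.
have Hg := restrict_closed_left_matching Hf cN size_closed_left_cut.
have Hh := restrict_closed_right_matching Hf cN size_closed_right_cut.
have clF := closed_left_stable HF cN; have crF := closed_right_stable HF cN.
apply: natf_inj => x xN; rewrite natf_glue //.
case: (glue_fun_cases Hn HU HV Hg Hh xN) => xX.
- rewrite glue_fun_inner_left // inner_left_ends; rewrite inner_left_ends in xX.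
  have ix : index x (closed_left F c) < l.*2.
    by rewrite -[X in _ < X]size_closed_left_cut index_mem.
  rewrite (natf_restrict size_closed_left_cut clF ix) /restr.
  by rewrite !nth_index ?clF.
- rewrite glue_fun_cross_left // cross_left_ends cross_right_ends.
  rewrite cross_left_ends in xX.
  have ix : index x (open_left F c) < k by rewrite -[X in _ < X]size_open_left index_mem.
  by rewrite permn_cut_perm // !nth_index ?(open_left_to_right HF cN).
- rewrite glue_fun_cross_right // cross_left_ends cross_right_ends.
  rewrite cross_right_ends in xX.
  have FxX := open_right_to_left HF cN xX.
  have ix : index (F x) (open_left F c) < k by rewrite -[X in _ < X]size_open_left index_mem.
  have [_ FFx _] := HF xN.
  have -> : index x (open_right N F c) = permn cut_perm (index (F x) (open_left F c)).
    by rewrite permn_cut_perm // nth_index // FFx.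
  by rewrite permnK // nth_index.
- rewrite glue_fun_inner_right // inner_right_ends; rewrite inner_right_ends in xX.
  have ix : index x (closed_right N F c) < m.*2.
    by rewrite -[X in _ < X]size_closed_right_cut index_mem.
  rewrite (natf_restrict size_closed_right_cut crF ix) /restr.
  by rewrite !nth_index ?crF.
Qed.

End Unglue.

Lemma card_cut_set l k m n (P : {set mfun l}) (Q : {set mfun m}) :
  n = l + k + m -> (forall g, g \in P -> is_matching g) ->
  (forall h, h \in Q -> is_matching h) ->
  #|cut_set n l k m P Q| =
    'C((l.*2 + k).-1, k) * 'C(n.*2 - (l.*2 + k), k) * k`! * #|P| * #|Q|.
Proof.
move=> Hn HP HQ; set c := l.*2 + k.
pose D := setX (setX (setX (setX [set U : {set 'I_c.-1} | #|U| == k]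
                                 [set V : {set 'I_(n.*2 - c)} | #|V| == k])
                           [set: {perm 'I_k}]) P) Q.
pose build (d : {set 'I_c.-1} * {set 'I_(n.*2 - c)} * {perm 'I_k} * mfun l * mfun m) :=
  glue d.1.1.1.1 d.1.1.1.2 d.1.1.2 d.1.2 d.2 : mfun n.
have memD (U : {set 'I_c.-1}) (V : {set 'I_(n.*2 - c)}) (p : {perm 'I_k}) g h :
  ((U, V, p, g, h) \in D) = [&& #|U| == k, #|V| == k, g \in P & h \in Q].
  by rewrite !inE andbT -!andbA.
have -> : cut_set n l k m P Q = build @: D.
  apply/setP => f; apply/idP/imsetP => [fS | [[[[[U V] p] g] h]]].
    exists (@cut_left_ends l k n f, @cut_right_ends l k n f, cut_perm Hn fS,
            restrict l f (closed_left (natf f) c), restrict m f (closed_right n.*2 (natf f) c)).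
      rewrite memD (card_left_ends Hn fS) (card_right_ends Hn fS) !eqxx /=.
      by move: fS; rewrite inE => /and5P[_ _ _ -> ->].
    by rewrite /build /= glue_cut.
  rewrite memD => /and4P[/eqP HU /eqP HV gP hQ] ->.
  by rewrite /build /=; exact: (glue_in_cut_set Hn p HU HV (HP _ gP) (HQ _ hQ) gP hQ).
rewrite card_in_imset; first by rewrite !cardsX !card_draws !card_ord cardsT card_Sn.
move=> [[[[U1 V1] p1] g1] h1] [[[[U2 V2] p2] g2] h2].
rewrite !memD => /and4P[/eqP HU1 /eqP HV1 gP1 hQ1] /and4P[/eqP HU2 /eqP HV2 gP2 hQ2].
by apply: glue_inj; rewrite ?HP ?HQ.
Qed.

Theorem proposition2 (a b n : nat) (s : mfun a) (t : mfun b) :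
  is_matching s -> is_matching t -> a <= n ->
  #|Mset n (juxt s t)| =
    #|Mset n s| +
    \sum_(a <= l < n.+1) \sum_(k < (n - l).+1)
      'C(l.*2 + k - 1, k) * 'C(n.*2 - l.*2 - k, k) * k`! *
      #|mu l s| * #|Mset (n - l - k) t|.
Proof.
move=> Hs Ht _.
rewrite -(cardsID (Mset n s) (Mset n (juxt s t))) (setIidPr (Mset_sub_juxt n Hs Ht)).
rewrite (card_diff n Hs Ht); congr (_ + _).
apply: eq_big_nat => l /andP[_ ln]; apply: eq_bigr => k _.
have lkn : l + k <= n by have := ltn_ord k; lia.
rewrite card_cut_set ?subn1 ?subnDA //; first lia.
- by move=> g; rewrite inE => /andP[].
- by move=> h; rewrite inE => /andP[].
Qed.
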